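(* Let $X=\ell_p$ for some $1\le p<\infty$, or $X=c_0$, considered as a Banach algebra under coordinatewise multiplication. Let $\mathcal A$ be a finitely invariant Furstenberg family, $x_0\in X$ and $m\in\mathbb N$, and let $\lambda\in\mathbb C$ with $|\lambda|>1$. If $x_0^m$ is $\mathcal A$-hypercyclic for $\lambda B$, then so is $\sum_{\nu=m}^N\alpha_\nu x_0^\nu$ for any $N\ge m$ and any $\alpha_m,\ldots,\alpha_N\in\mathbb C$ with $\alpha_m\neq0$.
   Context: $\lambda B(x(1),x(2),x(3),\ldots)=(\lambda x(2),\lambda x(3),\ldots)$; powers are coordinatewise. A Furstenberg family is a non-empty family $\mathcal A$ of subsets of $\mathbb N_0$ with $\varnothing\notin\mathcal A$ and such that $A\in\mathcal A$, $A\subset B\subset\mathbb N_0$ imply $B\in\mathcal A$; it is finitely invariant if $A\in\mathcal A$ implies $A\setminus[0,N]\in\mathcal A$ for all $N\ge0$. A vector $x$ is $\mathcal A$-hypercyclic for an operator $T$ if for every non-empty open $U\subset X$, $\{n\ge0:T^nx\in U\}\in\mathcal A$. *)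

From Stdlib Require Import Reals.
From Coquelicot Require Import Coquelicot.
Open Scope R_scope.

(* Sequences x = (x(1), x(2), ...) are represented as functions nat -> C,
   index k standing for the coordinate x(k+1). *)
Definition seqC := nat -> C.

Definition rpow (t p : R) : R := if Req_EM_T t 0 then 0 else Rpower t p.

Inductive seqspace : Type :=
  | Lp (p : R)
  | C0.

Definition valid_space (S : seqspace) : Prop :=
  match S with
  | Lp p => 1 <= p
  | C0 => True
  end.

Definition inX (S : seqspace) (x : seqC) : Prop :=
  match S with
  | Lp p => ex_series (fun n => rpow (Cmod (x n)) p)
  | C0 => is_lim_seq (fun n => Cmod (x n)) 0
  end.

(* the norm of X (meaningful for x in X) *)
Definition normX (S : seqspace) (x : seqC) : R :=
  match S with
  | Lp p => rpow (Series (fun n => rpow (Cmod (x n)) p)) (/ p)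
  | C0 => real (Sup_seq (fun n => Cmod (x n)))
  end.

Definition seq_sub (x y : seqC) : seqC := fun n => Cminus (x n) (y n).

Definition openX (S : seqspace) (U : seqC -> Prop) : Prop :=
  (forall x, U x -> inX S x) /\
  (forall x, U x -> exists r, 0 < r /\
      forall y, inX S y -> normX S (seq_sub y x) < r -> U y).

Definition furstenberg_family (A : (nat -> Prop) -> Prop) : Prop :=
  (exists E, A E) /\
  ~ A (fun _ => False) /\
  (forall E F : nat -> Prop, A E -> (forall n, E n -> F n) -> A F).

Definition finitely_invariant (A : (nat -> Prop) -> Prop) : Prop :=
  forall E, A E -> forall N : nat, A (fun n => E n /\ (N < n)%nat).

Definition lamB (lam : C) (x : seqC) : seqC := fun n => Cmult lam (x (S n)).

Definition A_hypercyclic (S : seqspace) (A : (nat -> Prop) -> Prop)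
    (T : seqC -> seqC) (x : seqC) : Prop :=
  inX S x /\
  forall U : seqC -> Prop, openX S U -> (exists u, U u) ->
    A (fun n => U (Nat.iter n T x)).

Fixpoint cpow (z : C) (k : nat) : C :=
  match k with
  | O => RtoC 1
  | S k' => Cmult z (cpow z k')
  end.

Definition seq_pow (x : seqC) (k : nat) : seqC := fun n => cpow (x n) k.

Definition poly_seq (alpha : nat -> C) (m N : nat) (x : seqC) : seqC :=
  fun n => List.fold_right Cplus (RtoC 0)
             (List.map (fun nu => Cmult (alpha nu) (cpow (x n) nu))
                  (List.seq m (S N - m))).

From Stdlib Require Import Reals Lra Lia FunctionalExtensionality.
From Coquelicot Require Import Coquelicot.
Open Scope R_scope.

(* Write P(z) = a z^m + T(z) with a = alpha_m and |T(z)| <= K |z|^(m+1) for |z| <= 1.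
   Coordinate k of (lam B)^n P(x0) is lam^n P(x0(k+n)); as x0(j) -> 0, for n beyond
   some n0 the tail lam^n T(x0(k+n)) is at most e |a w_k| <= e (|a w_k - u_k| + |u_k|),
   where w = (lam B)^n x0^m.  Hence (lam B)^n P(x0) is close to u whenever a w is.
   The set of w with a w close to u is open and non-empty, so the orbit of x0^m
   visits it along a set in A, and finite invariance removes the times n <= n0.
   Closeness is measured by the modular sum |x_k|^p (resp. sup |x_k|): pointwise
   |x| <= c1 |y| + c2 |z| gives
   modX x <= ((1 + eps) c1)^p modX y + ((1 + 1/eps) c2)^p modX z,
   which replaces Minkowski's inequality. *)

Lemma rpow_0 p : rpow 0 p = 0.
Proof. unfold rpow; destruct (Req_EM_T 0 0); [reflexivity | congruence]. Qed.

Lemma rpow_pos t p : 0 < t -> 0 < rpow t p.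
Proof. intros Ht; unfold rpow; destruct (Req_EM_T t 0); [lra | apply exp_pos]. Qed.

Lemma rpow_nonneg t p : 0 <= t -> 0 <= rpow t p.
Proof.
  intros [Ht | <-]; [left; apply rpow_pos, Ht | rewrite rpow_0; lra].
Qed.

Lemma rpow_lt a b p : 0 < p -> 0 <= a -> a < b -> rpow a p < rpow b p.
Proof.
  intros Hp [Ha | <-] Hab; [| rewrite rpow_0; apply rpow_pos; lra].
  unfold rpow; destruct (Req_EM_T a 0); [lra |]; destruct (Req_EM_T b 0); [lra |].
  apply Rlt_Rpower_l; lra.
Qed.

Lemma rpow_le a b p : 0 < p -> 0 <= a -> a <= b -> rpow a p <= rpow b p.
Proof. intros Hp Ha [Hab | <-]; [left; apply rpow_lt |]; auto; lra. Qed.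

Lemma rpow_lt_inv a b p : 0 < p -> 0 <= b -> rpow a p < rpow b p -> a < b.
Proof.
  intros Hp Hb H; destruct (Rlt_or_le a b) as [| Hba]; [assumption |].
  pose proof (rpow_le b a p Hp Hb Hba); lra.
Qed.

Lemma rpow_mult a b p : 0 <= a -> 0 <= b -> rpow (a * b) p = rpow a p * rpow b p.
Proof.
  intros [Ha | <-] [Hb | <-]; rewrite ?Rmult_0_l, ?Rmult_0_r, ?rpow_0; try ring.
  unfold rpow; destruct (Req_EM_T (a * b) 0); [nra |].
  destruct (Req_EM_T a 0); [lra |]; destruct (Req_EM_T b 0); [lra |].
  symmetry; apply Rpower_mult_distr; assumption.
Qed.

Lemma rpow_le_self t p : 1 <= p -> 0 <= t <= 1 -> rpow t p <= t.
Proof.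
  intros Hp [[Ht | <-] Ht1]; [| rewrite rpow_0; lra].
  unfold rpow; destruct (Req_EM_T t 0); [lra |].
  replace p with (1 + (p - 1)) by ring.
  rewrite Rpower_plus, Rpower_1 by assumption.
  assert (Rpower t (p - 1) <= Rpower 1 (p - 1)) by (apply Rle_Rpower_l; lra).
  assert (Rpower 1 (p - 1) = 1) by (unfold Rpower; rewrite ln_1, Rmult_0_r; apply exp_0).
  assert (0 < Rpower t (p - 1)) by apply exp_pos.
  nra.
Qed.

Lemma rpow_rpow_inv t p : 0 < p -> 0 <= t -> rpow (rpow t (/ p)) p = t.
Proof.
  intros Hp [Ht | <-]; [| rewrite !rpow_0; reflexivity].
  pose proof (rpow_pos t (/ p) Ht) as Htp.
  unfold rpow at 1; destruct (Req_EM_T (rpow t (/ p)) 0); [lra |].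
  unfold rpow; destruct (Req_EM_T t 0); [lra |].
  rewrite Rpower_mult, Rinv_l by lra; apply Rpower_1, Ht.
Qed.

Lemma rpow_1_plus_small p d s : 0 < p -> 0 <= d < s ->
  exists eps, 0 < eps /\ rpow (1 + eps) p * d < s.
Proof.
  intros Hp Hds.
  set (d' := (d + s) / 2); set (q := s / d').
  assert (Hq : 1 < q)
    by (unfold q, d'; apply (Rmult_lt_reg_r ((d + s) / 2)); [lra |]; field_simplify; lra).
  assert (Hqd : q * d' = s) by (unfold q, d'; field; lra).
  set (c := Rpower q (/ (2 * p))).
  assert (Hc : 1 < c).
  { unfold c; rewrite <- (Rpower_O q) by lra; apply Rpower_lt; [lra |].
    apply Rinv_0_lt_compat; lra. }
  assert (Hcp : rpow c p < q).
  { unfold rpow; destruct (Req_EM_T c 0); [lra |].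
    unfold c; rewrite Rpower_mult.
    replace (/ (2 * p) * p) with (/ 2) by (field; lra).
    rewrite <- (Rpower_1 q) at 2 by lra; apply Rpower_lt; lra. }
  exists (c - 1); split; [lra |].
  replace (1 + (c - 1)) with c by ring.
  pose proof (rpow_pos c p ltac:(lra)).
  unfold d' in Hqd; nra.
Qed.

Definition powX (S : seqspace) (t : R) : R :=
  match S with Lp p => rpow t p | C0 => t end.

Definition modX (S : seqspace) (x : seqC) : R :=
  match S with
  | Lp p => Series (fun n => rpow (Cmod (x n)) p)
  | C0 => real (Sup_seq (fun n => Cmod (x n)))
  end.

Lemma powX_0 S : powX S 0 = 0.
Proof. destruct S; simpl; auto using rpow_0. Qed.

Lemma powX_pos S t : 0 < t -> 0 < powX S t.
Proof. destruct S; simpl; auto using rpow_pos. Qed.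

Lemma powX_nonneg S t : 0 <= t -> 0 <= powX S t.
Proof. destruct S; simpl; auto using rpow_nonneg. Qed.

Lemma powX_le S a b : valid_space S -> 0 <= a -> a <= b -> powX S a <= powX S b.
Proof. destruct S; simpl; intros; auto; apply rpow_le; auto; lra. Qed.

Lemma powX_mult S a b : 0 <= a -> 0 <= b -> powX S (a * b) = powX S a * powX S b.
Proof. destruct S; simpl; auto using rpow_mult. Qed.

Lemma powX_le_self S t : valid_space S -> 0 <= t <= 1 -> powX S t <= t.
Proof. destruct S; simpl; intros; auto using rpow_le_self; lra. Qed.

Lemma powX_1_plus_small S d s : valid_space S -> 0 <= d < s ->
  exists eps, 0 < eps /\ powX S (1 + eps) * d < s.
Proof.
  destruct S as [p |]; simpl; intros Hp Hds; [apply rpow_1_plus_small; lra |].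
  exists ((s - d) / (2 * (d + 1))); split.
  - apply Rdiv_lt_0_compat; lra.
  - apply (Rmult_lt_reg_r (2 * (d + 1))); [lra |]; field_simplify; nra.
Qed.

(* [b + c <= max ((1 + eps) b) ((1 + / eps) c)]. *)
Lemma powX_quasi_triangle S a b c eps : valid_space S -> 0 <= a -> 0 <= b -> 0 <= c -> 0 < eps ->
  a <= b + c -> powX S a <= powX S ((1 + eps) * b) + powX S ((1 + / eps) * c).
Proof.
  intros HS Ha Hb Hc He Habc.
  assert (Hie : 0 < / eps) by (apply Rinv_0_lt_compat, He).
  pose proof (powX_nonneg S ((1 + eps) * b) ltac:(nra)).
  pose proof (powX_nonneg S ((1 + / eps) * c) ltac:(nra)).
  destruct (Rle_or_lt c (eps * b)) as [Hcb | Hbc].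
  - assert (powX S a <= powX S ((1 + eps) * b)) by (apply powX_le; auto; nra); lra.
  - assert (b * eps <= c * / eps * eps) by (rewrite Rmult_assoc, Rinv_l; lra).
    assert (powX S a <= powX S ((1 + / eps) * c)) by (apply powX_le; auto; nra); lra.
Qed.

Lemma powX_dominated S a b c c1 c2 eps : valid_space S ->
  0 <= a -> 0 <= b -> 0 <= c -> 0 <= c1 -> 0 <= c2 -> 0 < eps -> a <= c1 * b + c2 * c ->
  powX S a <= powX S ((1 + eps) * c1) * powX S b + powX S ((1 + / eps) * c2) * powX S c.
Proof.
  intros HS Ha Hb Hc Hc1 Hc2 He Habc.
  assert (Hie : 0 < / eps) by (apply Rinv_0_lt_compat, He).
  rewrite <- !powX_mult, !Rmult_assoc by nra.
  apply powX_quasi_triangle; auto; nra.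
Qed.

Lemma is_lim_seq_0_bounded (f : nat -> R) : is_lim_seq f 0 -> exists B, forall k, f k <= B.
Proof.
  intros Hf; apply is_lim_seq_Reals in Hf.
  destruct (maj_by_pos f (exist _ 0 Hf)) as [B [_ HB]].
  exists B; intros k; eapply Rle_trans; [apply Rle_abs | apply HB].
Qed.

Lemma Sup_seq_bounded_spec (f : nat -> R) B : (forall k, f k <= B) ->
  (forall k, f k <= real (Sup_seq f)) /\
  (forall c, (forall k, f k <= c) -> real (Sup_seq f) <= c).
Proof.
  intros HB.
  assert (Hub : forall c, (forall k, f k <= c) -> Rbar_le (Sup_seq f) c).
  { intros c Hc; rewrite <- (is_sup_seq_unique (fun _ => Finite c) c).
    - apply Sup_seq_le; exact Hc.
    - intros eps; split; [intros; simpl; pose proof (cond_pos eps); lra |].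
      exists 0%nat; simpl; pose proof (cond_pos eps); lra. }
  assert (Hlb : forall k, Rbar_le (f k) (Sup_seq f))
    by (intros k; apply (Sup_seq_minor_le _ _ k), Rle_refl).
  pose proof (Hub B HB) as HsB; pose proof (Hlb 0%nat) as Hs0.
  destruct (Sup_seq f) as [l | |]; simpl in *; try contradiction.
  split; [exact Hlb | exact Hub].
Qed.

Lemma series_dominated (f g h : nat -> R) K1 K2 :
  (forall k, 0 <= f k <= K1 * g k + K2 * h k) -> ex_series g -> ex_series h ->
  ex_series f /\ Series f <= K1 * Series g + K2 * Series h.
Proof.
  intros Hf Hg Hh.
  assert (Hgh : ex_series (fun k => K1 * g k + K2 * h k))
    by (apply (ex_series_plus (fun k => K1 * g k));
        [exact (ex_series_scal_l K1 g Hg) | exact (ex_series_scal_l K2 h Hh)]).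
  split.
  - refine (@ex_series_le R_AbsRing R_CompleteNormedModule f _ _ Hgh).
    intros k; change norm with Rabs; simpl; rewrite Rabs_pos_eq; apply Hf.
  - rewrite <- !Series_scal_l, <- Series_plus
      by (exact (ex_series_scal_l K1 g Hg) || exact (ex_series_scal_l K2 h Hh)).
    apply Series_le; assumption.
Qed.

Lemma sup_dominated (f g h : nat -> R) K1 K2 : 0 <= K1 -> 0 <= K2 ->
  (forall k, 0 <= f k <= K1 * g k + K2 * h k) ->
  (forall k, 0 <= g k) -> (forall k, 0 <= h k) -> is_lim_seq g 0 -> is_lim_seq h 0 ->
  is_lim_seq f 0 /\ real (Sup_seq f) <= K1 * real (Sup_seq g) + K2 * real (Sup_seq h).
Proof.
  intros HK1 HK2 Hf Hg0 Hh0 Hg Hh.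
  assert (Hf0 : is_lim_seq f 0).
  { apply (is_lim_seq_le_le (fun _ => 0) _ (fun k => K1 * g k + K2 * h k));
      [exact Hf | apply is_lim_seq_const |].
    replace (Finite 0) with (Finite (K1 * 0 + K2 * 0)) by (f_equal; ring).
    apply is_lim_seq_plus'; apply (is_lim_seq_scal_l _ _ (Finite 0)); assumption. }
  split; [exact Hf0 |].
  destruct (is_lim_seq_0_bounded g Hg) as [Bg HBg].
  destruct (is_lim_seq_0_bounded h Hh) as [Bh HBh].
  destruct (is_lim_seq_0_bounded f Hf0) as [Bf HBf].
  destruct (Sup_seq_bounded_spec g Bg HBg) as [Hgs _].
  destruct (Sup_seq_bounded_spec h Bh HBh) as [Hhs _].
  apply (Sup_seq_bounded_spec f Bf HBf); intros k.
  specialize (Hf k); specialize (Hgs k); specialize (Hhs k).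
  apply Rle_trans with (K1 * g k + K2 * h k); [apply Hf |].
  apply Rplus_le_compat; apply Rmult_le_compat_l; assumption.
Qed.

Lemma inX_Cmod_lim0 S x : valid_space S -> inX S x -> is_lim_seq (fun n => Cmod (x n)) 0.
Proof.
  destruct S as [p |]; simpl; intros Hp Hx; [| exact Hx].
  apply ex_series_lim_0, is_lim_seq_spec in Hx; apply is_lim_seq_spec.
  intros eps; destruct (Hx (mkposreal _ (rpow_pos eps p (cond_pos eps)))) as [N0 HN0].
  exists N0; intros n Hn; specialize (HN0 n Hn); simpl in HN0.
  rewrite Rminus_0_r, Rabs_pos_eq in HN0 by (apply rpow_nonneg, Cmod_ge_0).
  rewrite Rminus_0_r, Rabs_pos_eq by apply Cmod_ge_0.
  apply rpow_lt_inv in HN0; [exact HN0 | lra | left; apply cond_pos].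
Qed.

Lemma modX_nonneg S x : valid_space S -> inX S x -> 0 <= modX S x.
Proof.
  intros HS Hx; destruct S as [p |]; simpl in *.
  - rewrite <- (Rmult_0_l (Series (fun _ => 1))), <- Series_scal_l.
    apply Series_le; [| exact Hx].
    intros n; rewrite Rmult_0_l; split; [lra | apply rpow_nonneg, Cmod_ge_0].
  - destruct (is_lim_seq_0_bounded _ Hx) as [B HB].
    apply Rle_trans with (Cmod (x 0%nat)); [apply Cmod_ge_0 |].
    apply (Sup_seq_bounded_spec _ B HB).
Qed.

Lemma normX_lt_iff S x r : valid_space S -> inX S x -> 0 < r ->
  normX S x < r <-> modX S x < powX S r.
Proof.
  intros HS Hx Hr; pose proof (modX_nonneg S x HS Hx) as HM.
  destruct S as [p |]; simpl in *; [| tauto].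
  split; intros H.
  - rewrite <- (rpow_rpow_inv (Series _) p) by lra.
    apply rpow_lt; [lra | apply rpow_nonneg; exact HM | exact H].
  - apply (rpow_lt_inv _ _ p); [lra | lra |]; rewrite rpow_rpow_inv; [exact H | lra | exact HM].
Qed.

Lemma modX_dominated S (x y z : seqC) c1 c2 eps : valid_space S -> 0 <= c1 -> 0 <= c2 -> 0 < eps ->
  (forall k, Cmod (x k) <= c1 * Cmod (y k) + c2 * Cmod (z k)) -> inX S y -> inX S z ->
  inX S x /\
  modX S x <= powX S ((1 + eps) * c1) * modX S y + powX S ((1 + / eps) * c2) * modX S z.
Proof.
  intros HS Hc1 Hc2 He Hxyz Hy Hz.
  assert (Hk : forall k, 0 <= powX S (Cmod (x k)) <=
      powX S ((1 + eps) * c1) * powX S (Cmod (y k)) +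
      powX S ((1 + / eps) * c2) * powX S (Cmod (z k))).
  { intros k; split; [apply powX_nonneg, Cmod_ge_0 |].
    apply powX_dominated; auto using Cmod_ge_0. }
  destruct S as [p |]; simpl in *.
  - apply series_dominated; assumption.
  - assert (Hie : 0 < / eps) by (apply Rinv_0_lt_compat, He).
    apply sup_dominated; auto using Cmod_ge_0; nra.
Qed.

Lemma inX_dominated S (x y z : seqC) c1 c2 : valid_space S -> 0 <= c1 -> 0 <= c2 ->
  (forall k, Cmod (x k) <= c1 * Cmod (y k) + c2 * Cmod (z k)) -> inX S y -> inX S z -> inX S x.
Proof. intros; apply (modX_dominated S x y z c1 c2 1); auto; lra. Qed.

Lemma iter_lamB lam y n : Nat.iter n (lamB lam) y = fun k => (cpow lam n * y (k + n)%nat)%C.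
Proof.
  induction n as [| n IH]; apply functional_extensionality; intros k; simpl.
  - rewrite Nat.add_0_r; ring.
  - rewrite IH; unfold lamB; rewrite <- Nat.add_succ_comm; ring.
Qed.

Lemma Cmod_cpow z k : Cmod (cpow z k) = Cmod z ^ k.
Proof. induction k as [| k IH]; simpl; [apply Cmod_1 | rewrite Cmod_mult, IH; ring]. Qed.

(* [poly_seq alpha m N x k] is convertible to [poly_sum alpha (List.seq m (S N - m)) (x k)]. *)
Definition poly_sum (alpha : nat -> C) (l : list nat) (z : C) : C :=
  List.fold_right Cplus (RtoC 0) (List.map (fun nu => Cmult (alpha nu) (cpow z nu)) l).

Definition coef_sum (alpha : nat -> C) (l : list nat) : R :=
  List.fold_right Rplus 0 (List.map (fun nu => Cmod (alpha nu)) l).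

Lemma Cmod_poly_sum_le alpha l z c : (forall nu, List.In nu l -> Cmod z ^ nu <= c) ->
  Cmod (poly_sum alpha l z) <= c * coef_sum alpha l.
Proof.
  induction l as [| nu l IH]; intros Hl; unfold poly_sum, coef_sum in *; simpl.
  - rewrite Cmod_0; lra.
  - eapply Rle_trans; [apply Cmod_triangle |].
    rewrite Cmod_mult, Cmod_cpow, Rmult_plus_distr_l.
    apply Rplus_le_compat; [| apply IH; intros; apply Hl; right; assumption].
    rewrite Rmult_comm; apply Rmult_le_compat_r; [apply Cmod_ge_0 | apply Hl; left; reflexivity].
Qed.

Lemma coef_sum_nonneg alpha l : 0 <= coef_sum alpha l.
Proof.
  induction l as [| nu l IH]; unfold coef_sum in *; simpl; [lra |].
  pose proof (Cmod_ge_0 (alpha nu)); lra.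
Qed.

Lemma poly_sum_split alpha m N z : (m <= N)%nat ->
  poly_sum alpha (List.seq m (S N - m)) z =
  (alpha m * cpow z m + poly_sum alpha (List.seq (S m) (N - m)) z)%C.
Proof. intros H; replace (S N - m)%nat with (S (N - m)) by lia; reflexivity. Qed.

Lemma pow_le_pow_le_1 x p q : 0 <= x <= 1 -> (p <= q)%nat -> x ^ q <= x ^ p.
Proof.
  intros Hx Hpq; replace q with (p + (q - p))%nat by lia; rewrite pow_add.
  rewrite <- (Rmult_1_r (x ^ p)) at 2; apply Rmult_le_compat_l; [apply pow_le; lra |].
  rewrite <- (pow1 (q - p)); apply pow_incr; exact Hx.
Qed.

Lemma Cmod_poly_orbit_sub_le alpha m N (c z v : C) e : (m <= N)%nat -> Cmod z <= 1 -> 0 <= e ->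
  Cmod z * coef_sum alpha (List.seq (S m) (N - m)) <= e * Cmod (alpha m) ->
  Cmod (c * poly_sum alpha (List.seq m (S N - m)) z - v)%C <=
  (1 + e) * Cmod (alpha m * (c * cpow z m) - v)%C + e * Cmod v.
Proof.
  intros HmN Hz He HK; rewrite poly_sum_split by exact HmN.
  set (K := coef_sum alpha (List.seq (S m) (N - m))).
  set (T := poly_sum alpha (List.seq (S m) (N - m)) z).
  set (d := (alpha m * (c * cpow z m) - v)%C).
  assert (HT : Cmod T <= Cmod z ^ m * Cmod z * K).
  { apply Cmod_poly_sum_le; intros nu Hnu; apply List.in_seq in Hnu.
    replace (Cmod z ^ m * Cmod z) with (Cmod z ^ S m) by (simpl; ring).
    apply pow_le_pow_le_1; [split; [apply Cmod_ge_0 | exact Hz] | lia]. }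
  assert (HcT : Cmod (c * T) <= e * (Cmod d + Cmod v)).
  { apply Rle_trans with (e * Cmod (alpha m * (c * cpow z m))%C).
    - rewrite !Cmod_mult, Cmod_cpow.
      pose proof (Cmod_ge_0 c); pose proof (pow_le (Cmod z) m (Cmod_ge_0 z)).
      apply Rle_trans with (Cmod c * Cmod z ^ m * (Cmod z * K)).
      + rewrite Rmult_assoc, <- (Rmult_assoc (Cmod z ^ m)); apply Rmult_le_compat_l; assumption.
      + assert (0 <= Cmod c * Cmod z ^ m) by (apply Rmult_le_pos; assumption).
        apply Rle_trans with (Cmod c * Cmod z ^ m * (e * Cmod (alpha m)));
          [apply Rmult_le_compat_l; assumption |].
        right; ring.
    - apply Rmult_le_compat_l; [exact He |].
      replace (alpha m * (c * cpow z m))%C with (d + v)%C by (unfold d; ring).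
      apply Cmod_triangle. }
  replace (c * (alpha m * cpow z m + T) - v)%C with (d + c * T)%C by (unfold d; ring).
  eapply Rle_trans; [apply Cmod_triangle | lra].
Qed.

Lemma inX_poly_seq X alpha m N x : valid_space X -> (1 <= m)%nat -> inX X x ->
  inX X (poly_seq alpha m N x).
Proof.
  intros HX Hm Hx.
  destruct (is_lim_seq_0_bounded _ (inX_Cmod_lim0 X x HX Hx)) as [B0 HB0].
  set (B := Rmax 1 B0).
  assert (HB1 : 1 <= B) by apply Rmax_l.
  assert (HBN : 1 <= B ^ N) by (apply pow_R1_Rle, HB1).
  pose proof (coef_sum_nonneg alpha (List.seq m (S N - m))).
  apply (inX_dominated X _ x x (B ^ N * coef_sum alpha (List.seq m (S N - m))) 0); auto; try lra.
  - apply Rmult_le_pos; lra.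
  - intros k.
    replace (_ * Cmod (x k) + 0 * Cmod (x k))
      with (Cmod (x k) * B ^ N * coef_sum alpha (List.seq m (S N - m))) by ring.
    apply Cmod_poly_sum_le; intros nu Hnu; apply List.in_seq in Hnu.
    assert (Hxk : 0 <= Cmod (x k) <= B)
      by (split; [apply Cmod_ge_0 | eapply Rle_trans; [apply HB0 | apply Rmax_r]]).
    replace nu with (S (nu - 1)) by lia; simpl.
    apply Rmult_le_compat_l; [apply Cmod_ge_0 |].
    apply Rle_trans with (B ^ (nu - 1)); [apply pow_incr, Hxk | apply Rle_pow; [exact HB1 | lia]].
Qed.

Lemma A_hypercyclic_of_eventually_into S A T y z :
  furstenberg_family A -> finitely_invariant A -> A_hypercyclic S A T y -> inX S z ->
  (forall U, openX S U -> (exists u, U u) ->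
     exists V n0, openX S V /\ (exists v, V v) /\
       forall n, (n0 < n)%nat -> V (Nat.iter n T y) -> U (Nat.iter n T z)) ->
  A_hypercyclic S A T z.
Proof.
  intros [_ [_ Hmono]] Hfin [_ Hy] Hz Hinto; split; [exact Hz |].
  intros U HU HUne; destruct (Hinto U HU HUne) as (V & n0 & HV & HVne & HVU).
  apply (Hmono (fun n => V (Nat.iter n T y) /\ (n0 < n)%nat)).
  - exact (Hfin _ (Hy V HV HVne) n0).
  - intros n [HVn Hn]; exact (HVU n Hn HVn).
Qed.

Lemma openX_modX_affine_lt X (a : C) (u : seqC) s : valid_space X -> inX X u ->
  openX X (fun w => inX X w /\ modX X (fun k => a * w k - u k)%C < s).
Proof.
  intros HX Hu; split; [intros w [Hw _]; exact Hw |].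
  intros w [Hw Hws].
  assert (Hdw : inX X (fun k => a * w k - u k)%C).
  { apply (inX_dominated X _ w u (Cmod a) 1); auto using Cmod_ge_0; try lra.
    intros k; rewrite Rmult_1_l, <- Cmod_mult, <- Cmod_opp with (x := u k).
    apply Cmod_triangle. }
  pose proof (modX_nonneg X _ HX Hdw) as Hdw0.
  set (dw := modX X (fun k => a * w k - u k)%C) in *.
  destruct (powX_1_plus_small X dw s HX ltac:(lra)) as [eps [Heps Hepsd]].
  set (K := powX X ((1 + / eps) * Cmod a)).
  assert (HK : 0 <= K).
  { apply powX_nonneg, Rmult_le_pos; [| apply Cmod_ge_0].
    pose proof (Rinv_0_lt_compat eps Heps); lra. }
  set (gap := s - powX X (1 + eps) * dw).
  assert (Hgap : 0 < gap) by (unfold gap; lra).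
  set (rho := Rmin 1 (gap / (K + 1))).
  assert (Hrho : 0 < rho) by (apply Rmin_glb_lt; [lra | apply Rdiv_lt_0_compat; lra]).
  exists rho; split; [exact Hrho |].
  intros y Hy Hyw; split; [exact Hy |].
  assert (Hyw' : inX X (seq_sub y w)).
  { apply (inX_dominated X _ y w 1 1); auto; try lra.
    intros k; rewrite !Rmult_1_l, <- Cmod_opp with (x := w k); apply Cmod_triangle. }
  apply normX_lt_iff in Hyw; auto.
  assert (Hrho_le : powX X rho <= gap / (K + 1)).
  { eapply Rle_trans; [apply powX_le_self; auto; split; [lra | apply Rmin_l] | apply Rmin_r]. }
  destruct (modX_dominated X (fun k => a * y k - u k)%C (fun k => a * w k - u k)%C (seq_sub y w)
              1 (Cmod a) eps HX ltac:(lra) (Cmod_ge_0 a) Heps) as [_ Hle]; auto.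
  { intros k; unfold seq_sub; rewrite <- Cmod_mult, Rmult_1_l.
    replace (a * y k - u k)%C with ((a * w k - u k) + a * (y k - w k))%C by ring.
    apply Cmod_triangle. }
  rewrite Rmult_1_r in Hle; fold dw K in Hle.
  pose proof (modX_nonneg X _ HX Hyw').
  assert (K * modX X (seq_sub y w) <= K * (gap / (K + 1))) by (apply Rmult_le_compat_l; lra).
  assert (K * (gap / (K + 1)) < gap)
    by (apply (Rmult_lt_reg_r (K + 1)); [lra |]; field_simplify; nra).
  unfold gap in *; lra.
Qed.

Lemma exists_modX_affine_lt X (a : C) (u : seqC) s :
  valid_space X -> a <> RtoC 0 -> inX X u -> 0 < s ->
  exists w, inX X w /\ modX X (fun k => a * w k - u k)%C < s.
Proof.
  intros HX Ha Hu Hs; exists (fun k => / a * u k)%C.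
  assert (Hw : inX X (fun k => / a * u k)%C).
  { apply (inX_dominated X _ u u (Cmod (/ a)) 0); auto using Cmod_ge_0; try lra.
    intros k; rewrite <- Cmod_mult; lra. }
  split; [exact Hw |].
  destruct (modX_dominated X (fun k => a * (/ a * u k) - u k)%C u u 0 0 1 HX)
    as [_ Hle]; auto; try lra.
  { intros k; replace (a * (/ a * u k) - u k)%C with (RtoC 0) by (field; exact Ha).
    rewrite Cmod_0; lra. }
  rewrite !Rmult_0_r, powX_0 in Hle; lra.
Qed.

Lemma close_of_Cmod_sub_le X (t u d : seqC) e r : valid_space X -> inX X u -> inX X d -> 0 < r ->
  0 < e -> e <= / 2 -> e <= powX X r / (4 * (modX X u + 1)) ->
  modX X d < powX X r / (2 * powX X 4) ->
  (forall k, Cmod (t k - u k)%C <= (1 + e) * Cmod (d k) + e * Cmod (u k)) ->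
  inX X t /\ normX X (seq_sub t u) < r.
Proof.
  intros HX Hu Hd Hr He He2 HeMu Hds Htu_k.
  pose proof (modX_nonneg X u HX Hu) as HMu; set (Mu := modX X u) in *.
  pose proof (modX_nonneg X d HX Hd) as HMd.
  pose proof (powX_pos X r Hr) as Hpr; pose proof (powX_pos X 4 ltac:(lra)) as Hp4.
  destruct (modX_dominated X (seq_sub t u) d u (1 + e) e 1 HX
              ltac:(lra) ltac:(lra) ltac:(lra) Htu_k Hd Hu) as [Htu Hle].
  rewrite Rinv_1 in Hle; fold Mu in Hle.
  split.
  - apply (inX_dominated X _ (seq_sub t u) u 1 1); auto; try lra.
    intros k; rewrite !Rmult_1_l; unfold seq_sub.
    replace (t k) with (t k - u k + u k)%C at 1 by ring; apply Cmod_triangle.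
  - apply normX_lt_iff; auto.
    assert (powX X ((1 + 1) * (1 + e)) * modX X d <= powX X 4 * modX X d)
      by (apply Rmult_le_compat_r; [lra | apply powX_le; auto; lra]).
    assert (powX X 4 * modX X d < powX X r / 2).
    { replace (powX X r / 2) with (powX X 4 * (powX X r / (2 * powX X 4))) by (field; lra).
      apply Rmult_lt_compat_l; assumption. }
    assert (Hpe : powX X ((1 + 1) * e) <= powX X r / (2 * (Mu + 1))).
    { eapply Rle_trans; [apply powX_le_self; auto; lra |].
      apply Rle_trans with (2 * (powX X r / (4 * (Mu + 1)))); [lra | right; field; lra]. }
    assert (powX X ((1 + 1) * e) * Mu <= powX X r / 2).
    { apply Rle_trans with (powX X r / (2 * (Mu + 1)) * Mu);
        [apply Rmult_le_compat_r; assumption |].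
      apply (Rmult_le_reg_r (2 * (Mu + 1))); [lra |]; field_simplify; nra. }
    lra.
Qed.

Lemma poly_orbit_eventually_near X (lam : C) (alpha : nat -> C) m N (x0 u : seqC) r :
  valid_space X -> inX X x0 -> (m <= N)%nat -> alpha m <> RtoC 0 -> inX X u -> 0 < r ->
  exists s n0, 0 < s /\ forall n, (n0 < n)%nat ->
    inX X (Nat.iter n (lamB lam) (seq_pow x0 m)) ->
    modX X (fun k => alpha m * Nat.iter n (lamB lam) (seq_pow x0 m) k - u k)%C < s ->
    inX X (Nat.iter n (lamB lam) (poly_seq alpha m N x0)) /\
    normX X (seq_sub (Nat.iter n (lamB lam) (poly_seq alpha m N x0)) u) < r.
Proof.
  intros HX Hx0 HmN Ha Hu Hr.
  assert (Ha0 : 0 < Cmod (alpha m)) by (apply Cmod_gt_0, Ha).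
  pose proof (coef_sum_nonneg alpha (List.seq (S m) (N - m))) as HK.
  set (K := coef_sum alpha (List.seq (S m) (N - m))) in HK.
  pose proof (modX_nonneg X u HX Hu) as HMu.
  pose proof (powX_pos X r Hr) as Hpr; pose proof (powX_pos X 4 ltac:(lra)) as Hp4.
  set (e := Rmin (/ 2) (powX X r / (4 * (modX X u + 1)))).
  assert (He : 0 < e) by (apply Rmin_glb_lt; [lra | apply Rdiv_lt_0_compat; lra]).
  set (delta := Rmin 1 (e * Cmod (alpha m) / (K + 1))).
  assert (Hdelta : 0 < delta) by (apply Rmin_glb_lt; [lra | apply Rdiv_lt_0_compat; nra]).
  pose proof (inX_Cmod_lim0 X x0 HX Hx0) as Hlim; apply is_lim_seq_spec in Hlim.
  destruct (Hlim (mkposreal delta Hdelta)) as [n0 Hn0]; simpl in Hn0.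
  exists (powX X r / (2 * powX X 4)), n0; split; [apply Rdiv_lt_0_compat; lra |].
  intros n Hn Hw Hws; rewrite iter_lamB in Hw, Hws |- *.
  set (w := fun k => (cpow lam n * seq_pow x0 m (k + n)%nat)%C) in *.
  apply (close_of_Cmod_sub_le X _ u (fun k => alpha m * w k - u k)%C e);
    auto; try apply Rmin_l; try apply Rmin_r.
  - apply (inX_dominated X _ w u (Cmod (alpha m)) 1); auto using Cmod_ge_0; try lra.
    intros k; rewrite Rmult_1_l, <- Cmod_mult, <- Cmod_opp with (x := u k); apply Cmod_triangle.
  - intros k; specialize (Hn0 (k + n)%nat ltac:(lia)).
    rewrite Rminus_0_r, Rabs_pos_eq in Hn0 by apply Cmod_ge_0.
    apply Cmod_poly_orbit_sub_le; [exact HmN | | lra |].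
    + apply Rle_trans with delta; [lra | apply Rmin_l].
    + apply Rle_trans with (delta * K); [apply Rmult_le_compat_r; lra |].
      apply Rle_trans with (e * Cmod (alpha m) / (K + 1) * K);
        [apply Rmult_le_compat_r; [lra | apply Rmin_r] |].
      apply (Rmult_le_reg_r (K + 1)); [lra |]; field_simplify; nra.
Qed.

Theorem proposition2p1 :
  forall (X : seqspace) (A : (nat -> Prop) -> Prop) (x0 : seqC) (m : nat)
         (lam : C),
    valid_space X ->
    furstenberg_family A -> finitely_invariant A ->
    inX X x0 -> (1 <= m)%nat -> 1 < Cmod lam ->
    A_hypercyclic X A (lamB lam) (seq_pow x0 m) ->
    forall (N : nat) (alpha : nat -> C),
      (m <= N)%nat -> alpha m <> RtoC 0 ->
      A_hypercyclic X A (lamB lam) (poly_seq alpha m N x0).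
Proof.
  intros X A x0 m lam HX HA Hfin Hx0 Hm _ Hhyp N alpha HmN Ha.
  apply (A_hypercyclic_of_eventually_into X A (lamB lam) (seq_pow x0 m)); auto.
  { apply inX_poly_seq; assumption. }
  intros U [HUX HUopen] [u Hu].
  pose proof (HUX u Hu) as HuX; destruct (HUopen u Hu) as [r [Hr Hball]].
  destruct (poly_orbit_eventually_near X lam alpha m N x0 u r) as (s & n0 & Hs & Hnear); auto.
  exists (fun w => inX X w /\ modX X (fun k => alpha m * w k - u k)%C < s), n0.
  split; [apply openX_modX_affine_lt; auto |].
  split; [apply exists_modX_affine_lt; auto |].
  intros n Hn [Hw Hws]; destruct (Hnear n Hn Hw Hws) as [Ht Htu]; apply Hball; assumption.
Qed.
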